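(* For all integers $k\geq 1$, $i\geq k+3$ and $j\geq k+2$, we have $$R_k^{\mathcal{FO}}(i,j)=j+\Big\lfloor\frac{j-1}{k+1}\Big\rfloor,$$ where $\mathcal{FO}$ is the class of all forests.
   Context: All graphs are finite and simple. For a graph $G$ and a nonnegative integer $k$, a $k$-sparse $j$-set is a set of $j$ vertices of $G$ inducing a subgraph of maximum degree at most $k$; a $k$-dense $i$-set is a set of $i$ vertices of $G$ that is $k$-sparse in the complement of $G$ (i.e., each vertex of the set is non-adjacent to at most $k$ other vertices of the set). For a graph class $\mathcal{G}$, the $k$-defective Ramsey number $R_k^{\mathcal{G}}(i,j)$ is the smallest natural number $n$ such that every graph on $n$ vertices in $\mathcal{G}$ has either a $k$-dense $i$-set or a $k$-sparse $j$-set. A forest is a graph with no cycles. *)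

From mathcomp Require Import all_boot.
Set Implicit Arguments. Unset Strict Implicit. Unset Printing Implicit Defensive.

Definition simple_graph (T : finType) (e : rel T) : Prop :=
  symmetric e /\ irreflexive e.

Definition forest (T : finType) (e : rel T) : Prop :=
  forall p : seq T, uniq p -> 3 <= size p -> ~~ cycle e p.

Definition k_sparse (T : finType) (e : rel T) (k : nat) (S : {set T}) : Prop :=
  forall x, x \in S -> #|[set y in S | e x y]| <= k.

Definition k_dense (T : finType) (e : rel T) (k : nat) (S : {set T}) : Prop :=
  forall x, x \in S -> #|[set y in S | (y != x) && ~~ e x y]| <= k.

Definition forest_ramsey_prop (k i j n : nat) : Prop :=
  forall e : rel 'I_n, simple_graph e -> forest e ->
    (exists S : {set 'I_n}, #|S| = i /\ k_dense e k S) \/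
    (exists S : {set 'I_n}, #|S| = j /\ k_sparse e k S).

Definition is_forest_defective_ramsey (k i j N : nat) : Prop :=
  forest_ramsey_prop k i j N /\ forall n, n < N -> ~ forest_ramsey_prop k i j n.

From mathcomp Require Import all_boot zify.

Set Implicit Arguments.
Unset Strict Implicit.
Unset Printing Implicit Defensive.

(* Every nonempty vertex set of a forest contains a leaf, i.e. a vertex with at
   most one neighbour in the set.  Peeling leaves off one at a time, and
   deleting a leaf's neighbour only when the leaf is already saturated, one
   deletes at most n / (k + 2) of the n vertices and leaves a set of maximum
   degree at most k.  Conversely, in disjoint stars K_{1,k+1} a k-sparse set
   misses a vertex of every star, so it has at most n - n / (k + 2) vertices,
   while a k-dense set in a forest has at most k + 2 vertices because one of
   its leaves is non-adjacent to all but one of the others.  Finally,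
   n - n / (k + 2) >= j exactly when n >= j + (j - 1) / (k + 1). *)

Section Graph.
Variables (T : finType) (e : rel T).
Hypotheses (e_sym : symmetric e) (e_irr : irreflexive e).

Definition deg_in (A : {set T}) (x : T) : nat := #|[set y in A | e x y]|.

Lemma deg_inS (A B : {set T}) x : A \subset B -> deg_in A x <= deg_in B x.
Proof.
move/subsetP=> sAB; apply/subset_leq_card/subsetP=> y.
by rewrite !inE => /andP[/sAB -> ->].
Qed.

Lemma deg_inU1 (A : {set T}) x y : deg_in (y |: A) x <= e x y + deg_in A x.
Proof.
rewrite /deg_in (cardsD1 y) !inE eqxx /= leq_add2l.
by apply/subset_leq_card/subsetP=> z; rewrite !inE => /andP[/negPf -> /= ->].
Qed.

Lemma deg_in_sum (A : {set T}) x : \sum_(y in A) e x y = deg_in A x.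
Proof.
rewrite /deg_in -sum1_card big_mkcond [RHS]big_mkcond /=.
by apply: eq_bigr => y _; rewrite inE; case: (y \in A); case: (e x y).
Qed.

Lemma k_sparse_sub k (A B : {set T}) :
  A \subset B -> k_sparse e k B -> k_sparse e k A.
Proof.
move=> sAB spB x xA; apply: leq_trans (spB x (subsetP sAB x xA)).
exact: deg_inS.
Qed.

Lemma forest_of_leaf_edges :
  (forall x y, e x y ->
     (forall z, e x z -> z = y) \/ (forall z, e y z -> z = x)) ->
  forest e.
Proof.
move=> leaf_edge [|x0 [|x1 [|x2 s]]] //= uniq_p _; apply/negP.
move=> /and3P[e01 e12]; rewrite rcons_path => /andP[_ e_last0].
move: uniq_p; rewrite /= !inE !negb_or.
move=> /andP[/and3P[_ x02 _] /andP[/andP[_ x1s] _]].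
case: (leaf_edge _ _ e01) => [leaf0|leaf1]; last first.
  by move: x02; rewrite (leaf1 _ e12) eqxx.
have last_x1 : last x2 s = x1 by apply: leaf0; rewrite e_sym.
have := mem_last x2 s; rewrite last_x1 inE (negPf x1s) orbF => /eqP x12.
by rewrite x12 e_irr in e12.
Qed.

Section Deletion.
Variable k : nat.

(* Invariant of the leaf-peeling induction: [a x] counts the neighbours of [x]
   kept outside [V], and each deleted vertex costs [k + 2] from the budget
   [#|V| + sum a]. *)
Definition deletion_set (V : {set T}) (a : T -> nat) (D : {set T}) : Prop :=
  [/\ D \subset V, (k + 2) * #|D| <= #|V| + \sum_(x in V) a x
    & forall x, x \in V :\: D -> deg_in (V :\: D) x + a x <= k].

Lemma deletion_set0 a : deletion_set set0 a set0.
Proof. by split=> [||x]; rewrite ?sub0set ?cards0 ?muln0 ?inE. Qed.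

Lemma deletion_heavy (V D : {set T}) a x0 :
  x0 \in V -> k < a x0 ->
  deletion_set (V :\ x0) a D -> deletion_set V a (x0 |: D).
Proof.
move=> x0V heavy [sDV budget sparse].
have VD : V :\: (x0 |: D) = (V :\ x0) :\: D.
  by apply/setP=> y; rewrite !inE; case: (y == x0); case: (y \in D).
split; rewrite ?VD //.
  by rewrite subUset sub1set x0V (subset_trans sDV (subD1set V x0)).
have := cardsU1 x0 D; rewrite (cardsD1 x0 V) (big_setD1 x0 x0V) x0V /=.
nia.
Qed.

Lemma deletion_light (V D : {set T}) a x0 :
  x0 \in V -> deg_in V x0 <= 1 -> a x0 + deg_in V x0 <= k ->
  deletion_set (V :\ x0) (fun x => a x + e x0 x) D -> deletion_set V a D.
Proof.
move=> x0V leaf light [sDV budget sparse]; split.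
- exact: subset_trans sDV (subD1set V x0).
- have deg_x0 : deg_in (V :\ x0) x0 = deg_in V x0.
    apply: eq_card => y; rewrite !inE.
    by case: eqVneq => [->|]; rewrite ?e_irr ?andbF.
  move: budget; rewrite big_split /= deg_in_sum deg_x0.
  rewrite (cardsD1 x0 V) (big_setD1 x0 x0V) x0V /=; lia.
- move=> x xVD; have [->|xx0] := eqVneq x x0.
    by apply: leq_trans light; rewrite addnC leq_add2l deg_inS ?subsetDl.
  have xVD' : x \in (V :\ x0) :\: D by move: xVD; rewrite !inE xx0.
  have sub : V :\: D \subset x0 |: ((V :\ x0) :\: D).
    by apply/subsetP=> y; rewrite !inE; case: (y == x0).
  have := sparse x xVD'; have := deg_inU1 ((V :\ x0) :\: D) x x0.
  have := deg_inS x sub; rewrite (e_sym x); lia.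
Qed.

Lemma deletion_pendant (V D : {set T}) a x0 x1 :
  x0 \in V -> [set y in V | e x0 y] = [set x1] -> a x0 = k ->
  deletion_set (V :\ x0 :\ x1) a D -> deletion_set V a (x1 |: D).
Proof.
move=> x0V N_x0 ax0 [sDV budget sparse].
have nbr_x0 y : y \in V -> e x0 y = (y == x1).
  by move=> yV; rewrite -in_set1 -N_x0 inE yV.
have x1V : x1 \in V by have := set11 x1; rewrite -N_x0 inE => /andP[].
have x10 : x1 != x0.
  by apply: contraTneq (_ : e x0 x1) => [->|]; rewrite ?e_irr ?nbr_x0.
have x1V' : x1 \in V :\ x0 by rewrite !inE x10.
split.
- rewrite subUset sub1set x1V; apply: subset_trans sDV _.
  exact: subset_trans (subD1set _ x1) (subD1set V x0).
- have := cardsU1 x1 D; rewrite (cardsD1 x0 V) (big_setD1 x0 x0V) x0V.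
  rewrite (cardsD1 x1 (V :\ x0)) (big_setD1 x1 x1V') x1V' /=; nia.
- move=> x; rewrite in_setD in_setU1 negb_or => /andP[/andP[xx1 xD] xV].
  have [->|xx0] := eqVneq x x0.
    rewrite ax0 -[leqRHS]add0n leq_add2r leqn0 cards_eq0; apply/eqP/setP=> y.
    rewrite !inE; case: (boolP (y \in V)) => yV; rewrite ?andbF ?andbT //.
    by rewrite nbr_x0 //; case: (y == x1); rewrite ?andbF.
  have xV' : x \in (V :\ x0 :\ x1) :\: D by rewrite !inE xx1 xx0 xD xV.
  have sub : V :\: (x1 |: D) \subset x0 |: ((V :\ x0 :\ x1) :\: D).
    apply/subsetP=> y; rewrite !inE.
    by case: (y == x0); case: (y == x1); case: (y \in D).
  have ex0 : e x x0 = false by rewrite e_sym nbr_x0 // (negPf xx1).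
  have := sparse x xV'; have := deg_inU1 ((V :\ x0 :\ x1) :\: D) x x0.
  have := deg_inS x sub; rewrite ex0; lia.
Qed.

End Deletion.

Section Acyclic.
Hypothesis e_forest : forest e.

Lemma forest_path_adj_head x s y :
  uniq (x :: s) -> path e x s -> e x y -> y \in s -> y = head x s.
Proof.
move=> uxs pxs exy ys; move: uxs pxs; case/splitPr: ys => r1 r2.
case: r1 => [//|z r1] uxs pxs.
have u_cyc : uniq (x :: rcons (z :: r1) y).
  by move: uxs; rewrite -cat_rcons -cat_cons cat_uniq => /andP[].
have := e_forest u_cyc; rewrite /= size_rcons => /(_ isT)/negP[].
move: pxs; rewrite -cat_rcons cat_path => /andP[pxy _].
by rewrite /cycle rcons_path last_rcons (e_sym y) exy andbT.
Qed.

Lemma forest_leaf (V : {set T}) :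
  V != set0 -> exists2 x, x \in V & deg_in V x <= 1.
Proof.
move=> V0; apply/exists_inP/contraT => /exists_inPn deg2.
have long_path m : exists x s, [/\ uniq (x :: s), size s = m,
    {subset x :: s <= V} & path e x s].
  elim: m => [|m [x [s [uxs <- sV pxs]]]].
    case/set0Pn: V0 => x xV; exists x, [::]; split=> // y.
    by rewrite inE => /eqP ->.
  have xV : x \in V by apply: sV; rewrite mem_head.
  have : 0 < #|[set y in V | e x y] :\ head x s|.
    move: (deg2 x xV); rewrite -ltnNge /deg_in.
    by rewrite (cardsD1 (head x s) [set y in V | e x y]); lia.
  rewrite card_gt0 => /set0Pn[y]; rewrite !inE => /and3P[yh yV exy].
  have yxs : y \notin x :: s.
    rewrite inE negb_or; apply/andP; split.
      by apply: contraTneq exy => ->; rewrite e_irr.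
    by apply: contraNN yh => ys; rewrite (forest_path_adj_head uxs pxs exy ys).
  exists y, (x :: s); split=> //=; first by rewrite yxs.
    by move=> z; rewrite inE => /predU1P[-> //|/sV].
  by rewrite e_sym exy.
have [x [s [uxs size_s _ _]]] := long_path #|T|.
by have := max_card (mem (x :: s)); rewrite (card_uniqP uxs) /= size_s ltnn.
Qed.

Lemma forest_k_dense_card k (S : {set T}) : k_dense e k S -> #|S| <= k.+2.
Proof.
move=> denseS; have [->|S0] := eqVneq S set0; first by rewrite cards0.
have [x xS degx] := forest_leaf S0.
have sub : S :\ x \subset
    [set y in S | e x y] :|: [set y in S | (y != x) && ~~ e x y].
  by apply/subsetP=> y; rewrite !inE => /andP[-> ->] /=; case: (e x y).
rewrite (cardsD1 x S) xS add1n ltnS; apply: leq_trans (subset_leq_card sub) _.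
exact: leq_trans (leq_card_setU _ _) (leq_add degx (denseS x xS)).
Qed.

Lemma forest_deletion k (V : {set T}) a : exists D, deletion_set k V a D.
Proof.
have [n] := ubnP #|V|; elim: n => // n IH in V a *; rewrite ltnS => leVn.
have [->|V0] := eqVneq V set0; first by exists set0; apply: deletion_set0.
have [x0 x0V leaf] := forest_leaf V0.
have ltV : #|V :\ x0| < n by move: leVn; rewrite (cardsD1 x0 V) x0V.
have [heavy|light] := ltnP k (a x0).
  have [D delD] := IH _ a ltV.
  by exists (x0 |: D); apply: deletion_heavy delD.
have [fits|tight] := leqP (a x0 + deg_in V x0) k.
  have [D delD] := IH _ (fun x => a x + e x0 x) ltV.
  by exists D; apply: deletion_light delD.
have ax0 : a x0 = k by lia.
have /cards1P[x1 N_x0] : deg_in V x0 == 1 by apply/eqP; lia.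
have ltV' : #|V :\ x0 :\ x1| < n.
  exact: leq_ltn_trans (subset_leq_card (subD1set _ _)) ltV.
have [D delD] := IH _ a ltV'.
by exists (x1 |: D); apply: deletion_pendant delD.
Qed.

Lemma forest_k_sparse_large k :
  exists S : {set T}, k_sparse e k S /\ #|T| <= #|S| + #|T| %/ (k + 2).
Proof.
have [D [_ budget sparse]] := forest_deletion k setT (fun _ => 0).
exists (~: D); split.
  by move=> x xD; have := sparse x; rewrite setTD addn0; apply.
rewrite big1_eq addn0 cardsT in budget.
by rewrite -{1}(cardsC D) addnC leq_add2l leq_divRL ?addn_gt0 ?orbT // mulnC.
Qed.

End Acyclic.
End Graph.

Lemma exists_subset_card (T : finType) (A : {set T}) m :
  m <= #|A| -> exists2 B : {set T}, B \subset A & #|B| = m.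
Proof.
rewrite -bin_gt0 -cards_draws card_gt0 => /set0Pn[B].
by rewrite inE => /andP[sBA /eqP cardB]; exists B.
Qed.

Section StarForest.
Variables d n : nat.

(* Blocks [t * d, t * d + d) of consecutive vertices; inside each block the
   first vertex is joined to all the others. *)
Definition star_forest : rel 'I_n := fun u v =>
  [&& u != v, u %/ d == v %/ d & (u %% d == 0) || (v %% d == 0)].

Lemma star_forest_sym : symmetric star_forest.
Proof. by move=> u v; rewrite /star_forest eq_sym (eq_sym (u %/ d)) orbC. Qed.

Lemma star_forest_irr : irreflexive star_forest.
Proof. by move=> u; rewrite /star_forest eqxx. Qed.

Lemma star_forest_leaf (u v w : 'I_n) :
  u %% d != 0 -> star_forest u v -> star_forest u w -> v = w.
Proof.
move=> /negPf u_leaf /and3P[_ /eqP uv]; rewrite u_leaf => /eqP v0.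
move=> /and3P[_ /eqP uw]; rewrite u_leaf => /eqP w0.
by apply: ord_inj; rewrite (divn_eq v d) (divn_eq w d) v0 w0 -uv -uw.
Qed.

Lemma star_forest_forest : forest star_forest.
Proof.
apply: forest_of_leaf_edges; first exact: star_forest_sym.
  exact: star_forest_irr.
move=> u v uv; have [u0|u_leaf] := eqVneq (u %% d) 0; last first.
  by left=> w uw; apply: star_forest_leaf u_leaf uw uv.
have v_leaf : v %% d != 0.
  move: uv => /and3P[/eqP + /eqP uv _]; apply: contra_not_neq => /eqP v0.
  by apply: ord_inj; rewrite (divn_eq u d) (divn_eq v d) u0 (eqP v0) uv.
by right=> w vw; apply: star_forest_leaf v_leaf vw _; rewrite star_forest_sym.
Qed.

Lemma star_forest_block_hole k (S : {set 'I_n}) t :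
  k + 2 <= d -> t.+1 * d <= n -> k_sparse star_forest k S ->
  exists y : 'I_n, (y \notin S) && (y %/ d == t).
Proof.
move=> kd tn sparseS; apply/existsP; apply: contraT => /existsPn no_hole.
have in_S (y : 'I_n) : y %/ d == t -> y \in S.
  by move: (no_hole y); rewrite negb_and negbK => /orP[// | /negP].
have c_lt : t * d < n by move: tn; rewrite mulSn; lia.
pose c := Ordinal c_lt.
have block u : u < d -> (t * d + u) %/ d = t.
  by move=> ud; rewrite divnMDl ?divn_small ?addn0 //; lia.
pose h (u : 'I_d.-1) : 'I_n := insubd c (t * d + u.+1).
have val_h u : val (h u) = t * d + u.+1.
  by rewrite val_insubd; case: ifP => //; have := ltn_ord u; lia.
have h_inj : injective h.
  by move=> u1 u2 /(congr1 val); rewrite !val_h => /addnI[/val_inj].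
have h_nbr : h @: setT \subset [set y in S | star_forest c y].
  apply/subsetP=> _ /imsetP[u _ ->]; have ud : u.+1 < d by have := ltn_ord u; lia.
  have hu_t : h u %/ d = t by rewrite val_h block.
  rewrite inE in_S ?hu_t //= /star_forest /= hu_t mulnK ?modnMl ?eqxx ?andbT.
    by apply/eqP => /(congr1 val); rewrite val_h /=; lia.
  by lia.
have c_t : c %/ d == t by rewrite /= mulnK //; lia.
have := leq_trans (subset_leq_card h_nbr) (sparseS c (in_S c c_t)).
by rewrite card_imset // cardsT card_ord -subn1; lia.
Qed.

Lemma star_forest_k_sparse_card k (S : {set 'I_n}) :
  k + 2 <= d -> k_sparse star_forest k S -> #|S| + n %/ d <= n.
Proof.
move=> kd sparseS.
have hole (t : 'I_(n %/ d)) : exists y : 'I_n, (y \notin S) && (y %/ d == t).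
  apply: (star_forest_block_hole kd _ sparseS).
  by rewrite -leq_divRL ?ltn_ord // (leq_trans _ kd) ?addn2.
have [g g_hole] := fin_all_exists hole.
have g_inj : injective g.
  move=> t1 t2 g12; apply: ord_inj.
  have /andP[_ /eqP <-] := g_hole t1; have /andP[_ /eqP <-] := g_hole t2.
  by rewrite g12.
have g_out : g @: setT \subset ~: S.
  by apply/subsetP=> _ /imsetP[t _ ->]; rewrite inE; case/andP: (g_hole t).
have := subset_leq_card g_out; rewrite card_imset // cardsT card_ord.
by rewrite -(leq_add2l #|S|) cardsC card_ord.
Qed.

End StarForest.

Lemma ramsey_threshold k j n :
  0 < j -> (j <= n - n %/ (k + 2)) = (j + (j - 1) %/ (k + 1) <= n).
Proof.
move=> j_gt0.
have j_eq := divn_eq (j - 1) (k + 1); have n_eq := divn_eq n (k + 2).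
have r_lt : (j - 1) %% (k + 1) < k + 1 by rewrite ltn_mod addn1.
have b_lt : n %% (k + 2) < k + 2 by rewrite ltn_mod addn2.
set q := (j - 1) %/ _ in j_eq *; set r := (j - 1) %% _ in j_eq r_lt.
set a := n %/ _ in n_eq *; set b := n %% _ in n_eq b_lt.
by have [qa|aq] := leqP q a; apply/idP/idP; nia.
Qed.

Theorem theorem3p2 (k i j : nat) :
  1 <= k -> k + 3 <= i -> k + 2 <= j ->
  is_forest_defective_ramsey k i j (j + (j - 1) %/ (k + 1)).
Proof.
move=> _ ki kj; have j_gt0 : 0 < j by lia.
have threshold := ramsey_threshold k _ j_gt0.
split=> [e [e_sym e_irr] e_forest | n ltnN ramsey].
  right; have [S [sparseS]] := forest_k_sparse_large e_sym e_irr e_forest k.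
  rewrite card_ord => largeS.
  have /(exists_subset_card (A := S))[S' subS' cardS'] : j <= #|S|.
    by move: (threshold (j + (j - 1) %/ (k + 1))); rewrite leqnn; lia.
  by exists S'; split; last exact: k_sparse_sub subS' sparseS.
have star_sym := @star_forest_sym (k + 2) n.
have star_irr := @star_forest_irr (k + 2) n.
have star_acyclic := @star_forest_forest (k + 2) n.
have [[S [cardS denseS]]|[S [cardS sparseS]]] :=
  ramsey _ (conj star_sym star_irr) star_acyclic.
  have := forest_k_dense_card star_sym star_irr star_acyclic denseS.
  by rewrite cardS; lia.
have := star_forest_k_sparse_card (leqnn (k + 2)) sparseS.
by move: (threshold n); rewrite cardS; lia.
Qed.
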